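(* Let $X$ be a $T_0$ space. If the Smyth power space $P_S(X)$ is first-countable, then $X$ is first-countable.
   Context: The specialization order of $X$ is $x\le y$ iff $x\in\overline{\{y\}}$; saturated sets are upper sets in this order. $\mathsf{K}(X)$ is the set of nonempty compact saturated subsets of $X$. For open $U\subseteq X$, $\Box U=\{K\in\mathsf{K}(X):K\subseteq U\}$; the Smyth power space $P_S(X)$ is $\mathsf{K}(X)$ with the topology having base $\{\Box U: U\text{ open}\}$. *)

From Stdlib Require Import List.
Set Implicit Arguments.
Unset Strict Implicit.

Record is_topology (X : Type) (open : (X -> Prop) -> Prop) : Prop := {
  top_full : open (fun _ => True);
  top_inter : forall U V, open U -> open V -> open (fun x => U x /\ V x);
  top_union : forall F : (X -> Prop) -> Prop,
      (forall U, F U -> open U) -> open (fun x => exists U, F U /\ U x)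
}.

Definition subset (X : Type) (A B : X -> Prop) : Prop := forall x, A x -> B x.

Definition T0 (X : Type) (open : (X -> Prop) -> Prop) : Prop :=
  forall x y, (forall U, open U -> (U x <-> U y)) -> x = y.

(* Specialization order: x <= y iff x is in the closure of {y},
   i.e. every open set containing x contains y. *)
Definition spec_le (X : Type) (open : (X -> Prop) -> Prop) (x y : X) : Prop :=
  forall U, open U -> U x -> U y.

Definition saturated (X : Type) (open : (X -> Prop) -> Prop) (A : X -> Prop) : Prop :=
  forall x y, spec_le open x y -> A x -> A y.

Definition compact (X : Type) (open : (X -> Prop) -> Prop) (K : X -> Prop) : Prop :=
  forall F : (X -> Prop) -> Prop,
    (forall U, F U -> open U) ->
    (forall x, K x -> exists U, F U /\ U x) ->
    exists l : list (X -> Prop),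
      (forall U, In U l -> F U) /\ (forall x, K x -> exists U, In U l /\ U x).

Definition nonempty (X : Type) (A : X -> Prop) : Prop := exists x, A x.

Definition KX (X : Type) (open : (X -> Prop) -> Prop) : Type :=
  { K : X -> Prop | nonempty K /\ compact open K /\ saturated open K }.

Definition Box (X : Type) (open : (X -> Prop) -> Prop) (U : X -> Prop)
  : KX open -> Prop :=
  fun K => subset (proj1_sig K) U.

(* Smyth topology on K(X): the topology generated by the base {Box U | U open}:
   W is open iff every point of W lies in some basic open Box U contained in W. *)
Definition smyth_open (X : Type) (open : (X -> Prop) -> Prop)
  (W : KX open -> Prop) : Prop :=
  forall K, W K -> exists U, open U /\ Box U K /\ subset (Box U) W.

(* First countability: every point has a countable base of open neighbourhoods
   (indexed by nat, repetitions allowed, so finite bases are included). *)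
Definition first_countable (X : Type) (open : (X -> Prop) -> Prop) : Prop :=
  forall x, exists B : nat -> (X -> Prop),
    (forall n, open (B n) /\ B n x) /\
    (forall U, open U -> U x -> exists n, subset (B n) U).
Arguments Box {X open} U K.
Arguments smyth_open {X} open W.

(** The map x |-> ↑x sends X into P_S(X), and ↑x lies in □U exactly when x lies
    in U.  A countable base at ↑x can be refined to basic opens □U_n, and then the
    U_n form a countable base at x: any open V containing x gives the open
    neighbourhood □V of ↑x, some □U_n lies inside it, and testing against ↑y
    shows U_n ⊆ V. *)

From Stdlib Require Import List ClassicalEpsilon.

Definition countable_base_at {Y : Type} (openY : (Y -> Prop) -> Prop) (y : Y) :
    Prop :=
  exists B : nat -> (Y -> Prop),
    (forall n, openY (B n) /\ B n y) /\
    (forall U, openY U -> U y -> exists n, subset (B n) U).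

Section SmythEmbedding.
Variables (X : Type) (open : (X -> Prop) -> Prop).

Definition up (x : X) : X -> Prop := spec_le open x.

Lemma up_nonempty (x : X) : nonempty (up x).
Proof. exists x; intros U _ Ux; exact Ux. Qed.

Lemma up_compact (x : X) : compact open (up x).
Proof.
  intros F openF coverF.
  destruct (coverF x (fun U _ Ux => Ux)) as [U [FU Ux]].
  exists (U :: nil); split.
  - intros V [<- | []]; exact FU.
  - intros y xy; exists U; split; [left; reflexivity | exact (xy U (openF U FU) Ux)].
Qed.

Lemma up_saturated (x : X) : saturated open (up x).
Proof. intros y z yz xy U openU Ux; exact (yz U openU (xy U openU Ux)). Qed.

Definition upK (x : X) : KX open :=
  exist _ (up x) (conj (up_nonempty x) (conj (up_compact x) (up_saturated x))).

Lemma Box_upK (U : X -> Prop) (x : X) : open U -> (Box U (upK x) <-> U x).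
Proof.
  intros openU; split.
  - intros upU; apply upU; intros V _ Vx; exact Vx.
  - intros Ux y xy; exact (xy U openU Ux).
Qed.

Lemma smyth_open_Box (U : X -> Prop) : open U -> smyth_open open (Box U).
Proof. intros openU K UK; exists U; repeat split; auto; intros L UL; exact UL. Qed.

Lemma smyth_basic_refinement (K : KX open) (B : nat -> (KX open -> Prop)) :
  (forall n, smyth_open open (B n) /\ B n K) ->
  exists U : nat -> (X -> Prop),
    forall n, open (U n) /\ Box (U n) K /\ subset (Box (U n)) (B n).
Proof.
  intros HB.
  assert (basic : forall n, exists U,
             open U /\ Box U K /\ subset (Box U) (B n)).
  { intros n; destruct (HB n) as [openBn BnK]; exact (openBn K BnK). }
  exists (fun n => proj1_sig (constructive_indefinite_description _ (basic n))).
  intros n; exact (proj2_sig (constructive_indefinite_description _ (basic n))).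
Qed.

Lemma countable_base_of_upK (x : X) :
  countable_base_at (smyth_open open) (upK x) -> countable_base_at open x.
Proof.
  intros [B [nbhdB baseB]].
  destruct (smyth_basic_refinement _ _ nbhdB) as [U HU].
  exists U; split.
  - intros n; destruct (HU n) as [openUn [upUn _]].
    split; [exact openUn | exact (proj1 (Box_upK _ x openUn) upUn)].
  - intros V openV Vx.
    destruct (baseB (Box V) (smyth_open_Box _ openV) (proj2 (Box_upK _ x openV) Vx))
      as [n BnV].
    exists n; intros y Uny.
    destruct (HU n) as [openUn [_ BoxUnBn]].
    apply (proj1 (Box_upK _ y openV)).
    exact (BnV _ (BoxUnBn _ (proj2 (Box_upK _ y openUn) Uny))).
Qed.

End SmythEmbedding.

Theorem mainTheorem6 (X : Type) (open : (X -> Prop) -> Prop) :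
  is_topology open -> T0 open ->
  first_countable ((smyth_open open)) ->
  first_countable open.
Proof.
  intros _ _ smyth_fc x.
  exact (countable_base_of_upK _ _ x (smyth_fc (upK X open x))).
Qed.
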